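(* Let $(M,d)$ be a metric space, $\mathsf{P}\subseteq M$ a set of $n$ points, and $1\le\ell\le k\le n$ integers; put $m=\lfloor k/\ell\rfloor$. Let $c\ge1$ and let $Q=\{q_1,\dots,q_m\}\subseteq\mathsf{P}$ be a $c$-approximate solution to the (non-fault-tolerant) $m$-center problem on $\mathsf{P}$, i.e. $\max_{p\in\mathsf{P}} d_Q(p,1)\le c\, r_{\mathrm{cen}}$ where $r_{\mathrm{cen}}=\min_{S\subseteq\mathsf{P},|S|=m}\max_{p\in\mathsf{P}} d_S(p,1)$. Let $C\subseteq\mathsf{P}$ be any set with $|C|=k$ and $C\supseteq\bigcup_{i=1}^m N_{\mathsf{P}}(q_i,\ell)$. Then $$\max_{p\in\mathsf{P}} d_C(p,\ell)\le (1+2c)\,r_{\mathrm{opt}},\qquad\text{where } r_{\mathrm{opt}}=\min_{C'\subseteq\mathsf{P},|C'|=k}\max_{p\in\mathsf{P}} d_{C'}(p,\ell).$$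
   Context: For a finite set $S\subseteq M$, a point $p\in M$ and an integer $1\le i\le|S|$, $d_S(p,i)$ denotes the radius of the smallest closed ball centered at $p$ containing at least $i$ points of $S$. The $i$ nearest neighbors of $p$ in $S$ are determined by ordering $s\in S$ lexicographically by $(d(p,s),\text{index of }s)$ (points of $\mathsf{P}=\{p_1,\dots,p_n\}$ are indexed); $N_S(p,i)$ is the set of the first $i$ points in this order, so $|N_S(p,i)|=i$. The fault-tolerant $k$-center cost of $C$ is $\max_{p\in\mathsf{P}} d_C(p,\ell)$; $\ell=1$ is ordinary $k$-center. *)

From HB Require Import structures.
From mathcomp Require Import all_boot all_order all_algebra.
Set Implicit Arguments. Unset Strict Implicit. Unset Printing Implicit Defensive.
Import Order.TTheory GRing.Theory Num.Theory.
Local Open Scope ring_scope.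

(* minimum of F over the elements of a finite type satisfying P (0 if none) *)
Definition fmin (R : realDomainType) (T : finType) (P : pred T) (F : T -> R) : R :=
  match [pick t | P t] with
  | Some t0 => \big[Num.min/F t0]_(t | P t) F t
  | None => 0
  end.

Definition fmax (R : realDomainType) (T : finType) (P : pred T) (F : T -> R) : R :=
  match [pick t | P t] with
  | Some t0 => \big[Num.max/F t0]_(t | P t) F t
  | None => 0
  end.

Definition is_metric (R : realDomainType) (M : Type) (d : M -> M -> R) : Prop :=
  (forall a b, d a b = 0 <-> a = b) /\
  (forall a b, d a b = d b a) /\
  (forall a b c, d a c <= d a b + d b c).

Section Defs.
Variables (R : realDomainType) (M : Type) (d : M -> M -> R) (n : nat)
          (pt : 'I_n -> M).
(* the point set P = {pt i | i : 'I_n}; subsets of P are index sets {set 'I_n} *)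

(* d_S(p,i): smallest radius r such that the closed ball B(p,r) contains at
   least i points of S; the minimum is attained at a distance d(p,s), s in S. *)
Definition dS (S : {set 'I_n}) (p : M) (i : nat) : R :=
  fmin (fun s => (s \in S) && leq i #|[set t in S | d p (pt t) <= d p (pt s)]|)
       (fun s => d p (pt s)).

Definition lexlt (p : M) (t s : 'I_n) : bool :=
  (d p (pt t) < d p (pt s)) || ((d p (pt t) == d p (pt s)) && (val t < val s)%N).

(* N_S(p,i): the first i points of S in that order *)
Definition NN (S : {set 'I_n}) (p : M) (i : nat) : {set 'I_n} :=
  [set s in S | leq #|[set t in S | lexlt p t s]|.+1 i].

Definition ftcost (C : {set 'I_n}) (l : nat) : R :=
  fmax predT (fun j : 'I_n => dS C (pt j) l).

Definition ropt (k l : nat) : R :=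
  fmin (fun C' : {set 'I_n} => #|C'| == k) (fun C' => ftcost C' l).
End Defs.

From HB Require Import structures.
From mathcomp Require Import all_boot all_order all_algebra.
From mathcomp Require Import zify lra.
Set Implicit Arguments. Unset Strict Implicit. Unset Printing Implicit Defensive.
Import Order.TTheory GRing.Theory Num.Theory.
Local Open Scope ring_scope.

(* Let r be the optimal fault-tolerant cost, attained by some C* with |C*| = k,
   so every ball B(p, r) contains at least l points of C*.
   1. Packing: a maximal 2r-separated set X of points has pairwise disjoint
      balls B(x, r), each holding l points of C*, hence |X| * l <= k and
      |X| <= m; maximality makes X a 2r-cover, so the m-center optimum is at
      most 2r and the given c-approximation Q covers every point within 2cr.
   2. Covering: the l nearest neighbours N(q, l) of q lie in B(q, r), since that
      ball already contains l points; as N(q, l) is contained in C, every p has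
      l points of C within d(p, q) + r <= 2cr + r. *)

Section FiniteExtrema.
Variables (R : realDomainType) (T : finType) (P : pred T) (F : T -> R).

Lemma fmin_le t : P t -> fmin P F <= F t.
Proof.
move=> Pt; rewrite /fmin; case: pickP => [t0 _|/(_ t)]; last by rewrite Pt.
by rewrite (bigD1 t) //= ge_min lexx.
Qed.

Lemma fmin_attain t : P t -> exists2 u, P u & fmin P F = F u.
Proof.
move=> Pt; rewrite /fmin; case: pickP => [t0 Pt0|/(_ t)]; last by rewrite Pt.
apply: (big_ind (fun v => exists2 u, P u & v = F u)); first by exists t0.
- move=> _ _ [a Pa ->] [b Pb ->].
  by have [ab|ba] := leP (F a) (F b); [exists a | exists b].
- by move=> i Pi; exists i.
Qed.

Lemma fmin_ge0 : (forall t, P t -> 0 <= F t) -> 0 <= fmin P F.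
Proof.
move=> F0; rewrite /fmin; case: pickP => [t Pt|_] //.
apply: (big_ind (fun v => 0 <= v)); first exact: F0.
- by move=> x y x0 y0; rewrite le_min x0 y0.
- exact: F0.
Qed.

Lemma fmax_ge t : P t -> F t <= fmax P F.
Proof.
move=> Pt; rewrite /fmax; case: pickP => [t0 _|/(_ t)]; last by rewrite Pt.
by rewrite (bigD1 t) //= le_max lexx.
Qed.

Lemma fmax_le b t : P t -> (forall u, P u -> F u <= b) -> fmax P F <= b.
Proof.
move=> Pt Fb; rewrite /fmax; case: pickP => [t0 Pt0|/(_ t)]; last by rewrite Pt.
apply: (big_ind (fun v => v <= b)); first exact: Fb.
- by move=> x y xb yb; rewrite ge_max xb yb.
- exact: Fb.
Qed.

End FiniteExtrema.

Lemma pad_set (n m : nat) (X : {set 'I_n}) :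
  (#|X| <= m)%N -> (m <= n)%N -> exists2 S : {set 'I_n}, X \subset S & #|S| = m.
Proof.
move e : (m - #|X|)%N => g; elim: g X e => [|g IH] X e Xm mn.
  by exists X => //; apply/eqP; rewrite eqn_leq Xm -subn_eq0 e.
have : ~~ ([set: 'I_n] \subset X).
  by apply/negP => /subset_leq_card; rewrite cardsT card_ord; lia.
case/subsetPn => y _ yX.
have cardyX : #|y |: X| = #|X|.+1 by rewrite cardsU1 yX.
have [|||S yXS Sm] := IH (y |: X); [lia | lia | done |].
by exists S => //; apply: subset_trans yXS; apply: subsetUr.
Qed.

Lemma card_set_sum (V : finType) (C : {set V}) (Q : pred V) :
  #|[set v in C | Q v]| = (\sum_(v in C) Q v)%N.
Proof.
rewrite -sum1_card big_mkcond [RHS]big_mkcond /=; apply: eq_bigr => v _.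
by rewrite inE; case: (v \in C); case: (Q v).
Qed.

Lemma double_count (T U : finType) (A : {set T}) (B : {set U}) (P : T -> U -> bool) :
  (\sum_(x in A) #|[set y in B | P x y]| = \sum_(y in B) #|[set x in A | P x y]|)%N.
Proof.
under eq_bigr do rewrite card_set_sum.
by rewrite exchange_big; apply: eq_bigr => y _; rewrite card_set_sum.
Qed.

Section PointSet.
Variables (R : realDomainType) (M : Type) (d : M -> M -> R) (n : nat)
          (pt : 'I_n -> M).

Definition ball (S : {set 'I_n}) (p : M) (rho : R) : {set 'I_n} :=
  [set t in S | d p (pt t) <= rho].

Lemma farthest_point (A : {set 'I_n}) (p : M) (t0 : 'I_n) :
  t0 \in A -> exists2 s, s \in A & forall t, t \in A -> d p (pt t) <= d p (pt s).
Proof.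
move=> t0A; case: (arg_maxP (fun t => d p (pt t)) t0A) => s sA sfar.
by exists s => // t /sfar.
Qed.

(* d_S(p, i) <= rho as soon as the ball of radius rho contains i points of S:
   the farthest of those points is a candidate radius. *)
Lemma dS_le_ball (S : {set 'I_n}) (p : M) (i : nat) (rho : R) :
  (0 < i)%N -> (i <= #|ball S p rho|)%N -> dS d pt S p i <= rho.
Proof.
move=> i0 iB; have /card_gt0P [t0 t0B] := leq_trans i0 iB.
have [s sB sfar] := farthest_point p t0B.
move: sB; rewrite inE => /andP[sS srho].
apply: le_trans srho; apply: fmin_le; rewrite sS /=.
apply: leq_trans iB (subset_leq_card _); apply/subsetP => t tB.
by move: (tB); rewrite !inE => /andP[-> _]; apply: sfar.
Qed.

Lemma ball_of_dS (S : {set 'I_n}) (p : M) (i : nat) (rho : R) :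
  (i <= #|S|)%N -> dS d pt S p i <= rho -> (i <= #|ball S p rho|)%N.
Proof.
case: i => // i iS dSrho; have /card_gt0P [t0 t0S] := leq_ltn_trans (leq0n i) iS.
have [s sS sfar] := farthest_point p t0S.
pose Q s := (s \in S) && (i.+1 <= #|ball S p (d p (pt s))|)%N.
have Qs : Q s.
  rewrite /Q sS /=; apply: leq_trans iS (subset_leq_card _).
  by apply/subsetP => t tS; rewrite inE tS sfar.
have [u /andP[uS ucard] dSu] := fmin_attain (fun s => d p (pt s)) Qs.
apply: leq_trans ucard (subset_leq_card _); apply/subsetP => t.
rewrite !inE => /andP[-> tu] /=; apply: le_trans tu _.
by rewrite -[d p (pt u)]dSu.
Qed.

Lemma ftcost_ge (C : {set 'I_n}) (l : nat) (j : 'I_n) :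
  dS d pt C (pt j) l <= ftcost d pt C l.
Proof. exact: (fmax_ge (fun j => dS d pt C (pt j) l)). Qed.

Lemma ftcost_le (C : {set 'I_n}) (l : nat) (b : R) :
  (0 < n)%N -> (forall j, dS d pt C (pt j) l <= b) -> ftcost d pt C l <= b.
Proof. by move=> n0 Cb; apply: (fmax_le (t := Ordinal n0)) => // j _. Qed.

Lemma ropt_le (C : {set 'I_n}) (k l : nat) :
  #|C| = k -> ropt d pt k l <= ftcost d pt C l.
Proof. by move=> Ck; apply: fmin_le; rewrite /= Ck. Qed.

Lemma ropt_attain (k l : nat) :
  (k <= n)%N -> exists2 C : {set 'I_n}, #|C| = k & ropt d pt k l = ftcost d pt C l.
Proof.
move=> kn; have [S0 _ S0k] := @pad_set n k set0 ltac:(by rewrite cards0) kn.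
rewrite /ropt.
have [C /eqP Ck ->] := fmin_attain (P := fun C : {set 'I_n} => #|C| == k)
  (fun C => ftcost d pt C l) (introT eqP S0k).
by exists C.
Qed.

Section Ranking.
Variable p : M.
Local Notation lt := (lexlt d pt p).

Lemma lexlt_irr s : ~~ lt s s.
Proof. by rewrite /lexlt ltxx eqxx ltnn. Qed.

Lemma lexlt_trans a b e : lt a b -> lt b e -> lt a e.
Proof.
rewrite /lexlt => /orP[ab|/andP[/eqP ab ab']] /orP[be|/andP[/eqP be be']].
- by rewrite (lt_trans ab be).
- by rewrite -be ab.
- by rewrite ab be.
- by rewrite ab be eqxx (ltn_trans ab' be') orbT.
Qed.

Lemma lexlt_total a b : a != b -> lt a b || lt b a.
Proof.
move=> ab; rewrite /lexlt; have [//|//|_] := ltgtP (d p (pt a)) (d p (pt b)).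
have [//|//|/val_inj eab] := ltngtP (val a) (val b).
by rewrite eab eqxx in ab.
Qed.

Definition rank (s : 'I_n) : nat := #|[set t | lt t s]|.

Lemma rank_lt a b : lt a b -> (rank a < rank b)%N.
Proof.
move=> ab; apply: proper_card; apply/properP; split.
  by apply/subsetP => t; rewrite !inE => ta; apply: lexlt_trans ta ab.
by exists a; rewrite !inE ?ab ?(negbTE (lexlt_irr a)).
Qed.

Lemma rank_ltn s : (rank s < n)%N.
Proof.
rewrite /rank -[n in (_ < n)%N]card_ord -cardsT; apply: proper_card.
by apply/properP; split; [apply: subsetT | exists s; rewrite ?inE ?lexlt_irr].
Qed.

Lemma rank_inj : injective rank.
Proof.
move=> a b eab; apply/eqP; apply: contraT => ab.
by case/orP: (lexlt_total ab) => /rank_lt; rewrite eab ltnn.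
Qed.

(* N_P(p, l) has exactly l points: ranks are a bijection from 'I_n onto 'I_n. *)
Lemma NN_card l : (l <= n)%N -> #|NN d pt [set: 'I_n] p l| = l.
Proof.
move=> ln; pose rk s : 'I_n := Ordinal (rank_ltn s).
have rk_inj : injective rk by move=> a b /(congr1 val) /rank_inj.
have -> : NN d pt [set: 'I_n] p l = rk @^-1: [set i : 'I_n | (i < l)%N].
  apply/setP => s; rewrite !inE /= /rank.
  by congr (_.+1 <= l)%N; apply: eq_card => t; rewrite !inE.
have -> : [set i : 'I_n | (i < l)%N] = widen_ord ln @: [set: 'I_l].
  apply/setP => i; rewrite inE.
  apply/idP/imsetP => [il | [j _ ->]]; last by rewrite /= ltn_ord.
  by exists (Ordinal il); rewrite ?inE //; apply: val_inj.
rewrite (card_preimset _ rk_inj) card_imset ?cardsT ?card_ord //.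
by move=> a b /(congr1 val) eab; apply: val_inj.
Qed.

Lemma NN_in_ball (S : {set 'I_n}) (l : nat) (rho : R) (s : 'I_n) :
  (l <= #|ball S p rho|)%N -> s \in NN d pt [set: 'I_n] p l -> d p (pt s) <= rho.
Proof.
move=> lB; rewrite inE => /andP[_ rks]; rewrite leNgt; apply/negP => far.
have : (#|ball S p rho| <= #|[set t in [set: 'I_n] | lt t s]|)%N.
  apply: subset_leq_card; apply/subsetP => t; rewrite !inE => /andP[_ trho].
  by rewrite /lexlt (le_lt_trans trho far).
by move/(leq_trans lB)/leq_ltn_trans/(_ rks); rewrite ltnn.
Qed.

End Ranking.

Lemma ropt_center_le (X : {set 'I_n}) (m : nat) (rho : R) :
  (0 < n)%N -> (#|X| <= m)%N -> (m <= n)%N ->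
  (forall p, exists2 x, x \in X & d (pt p) (pt x) <= rho) ->
  ropt d pt m 1 <= rho.
Proof.
move=> n0 Xm mn covX; have [S XS Sm] := pad_set Xm mn.
apply: le_trans (ropt_le 1 Sm) _; apply: ftcost_le => // p.
have [x xX px] := covX p; apply: dS_le_ball => //; rewrite card_gt0.
by apply/set0Pn; exists x; rewrite inE (subsetP XS x xX).
Qed.

Section Metric.
Hypothesis d_metric : is_metric d.

Lemma dist_self (a : M) : d a a = 0.
Proof. by case: d_metric => d0 _; apply/d0. Qed.

Lemma dist_ge0 (a b : M) : 0 <= d a b.
Proof.
case: d_metric => _ [dsym dtri]; have := dtri a b a.
by rewrite dist_self (dsym b a); lra.
Qed.

Lemma dS_ge0 (S : {set 'I_n}) (p : M) (i : nat) : 0 <= dS d pt S p i.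
Proof. by apply: fmin_ge0 => s _; apply: dist_ge0. Qed.

Definition separated (rho : R) (X : {set 'I_n}) : bool :=
  [forall x in X, forall y in X, (x != y) ==> (rho < d (pt x) (pt y))].

Lemma separated_lt (rho : R) (X : {set 'I_n}) (x y : 'I_n) :
  separated rho X -> x \in X -> y \in X -> x != y -> rho < d (pt x) (pt y).
Proof.
by move=> /forall_inP sepX xX yX; move: (sepX x xX) => /forall_inP/(_ y yX)/implyP.
Qed.

(* A rho-separated set of maximum size is also a rho-cover of all points. *)
Lemma separated_cover (rho : R) : 0 <= rho ->
  exists2 X, separated rho X & forall p, exists2 x, x \in X & d (pt p) (pt x) <= rho.
Proof.
move=> rho0; have sep0 : separated rho set0 by apply/forall_inP => x; rewrite inE.
case: (@arg_maxnP _ set0 (separated rho) (fun X => #|X|) sep0) => X sepX maxX.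
exists X => // p; case: (boolP [exists x in X, d (pt p) (pt x) <= rho]).
  by case/exists_inP => x; exists x.
move/exists_inPn => far; have pX : p \notin X.
  by apply/negP => pX; move: (far p pX); rewrite dist_self rho0.
have : separated rho (p |: X).
  case: d_metric => _ [dsym _].
  apply/forall_inP => x /setU1P xX; apply/forall_inP => y /setU1P yX.
  apply/implyP => xy; case: xX yX => [ex | xX] [ey | yX].
  - by rewrite ex ey eqxx in xy.
  - by rewrite ex ltNge far.
  - by rewrite ey dsym ltNge far.
  - exact: separated_lt sepX xX yX xy.
by move/maxX; rewrite /= cardsU1 pX ltnn.
Qed.

(* Packing: balls of radius r around a 2r-separated set are disjoint, so if each
   holds l points of S then the set has at most |S| / l points. *)
Lemma packing_bound (S X : {set 'I_n}) (r : R) (l : nat) :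
  separated (2 * r) X -> (forall x, x \in X -> l <= #|ball S (pt x) r|)%N ->
  (#|X| * l <= #|S|)%N.
Proof.
move=> sepX ballX; case: d_metric => _ [dsym dtri].
have one_center t : (#|[set x in X | (d (pt x) (pt t) <= r)%R]| <= 1)%N.
  apply/card_le1_eqP => x y; rewrite !inE => /andP[xX xt] /andP[yX yt].
  apply/eqP; apply: contraT => xy; have := separated_lt sepX yX xX xy.
  by have := dtri (pt y) (pt t) (pt x); rewrite (dsym (pt t)); lra.
rewrite -sum_nat_const; apply: (@leq_trans (\sum_(x in X) #|ball S (pt x) r|)).
  exact: leq_sum.
by rewrite double_count -sum1_card; apply: leq_sum => t _; apply: one_center.
Qed.

(* If B(q, r) holds l points (of some S), so that N_P(q, l) lies within r of q,
   and N_P(q, l) is contained in C, then p has l points of C within d(p, q) + r. *)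
Lemma dS_le_via_center (C S : {set 'I_n}) (p q : M) (l : nat) (r : R) :
  (0 < l)%N -> (l <= n)%N -> NN d pt [set: 'I_n] q l \subset C ->
  (l <= #|ball S q r|)%N -> dS d pt C p l <= d p q + r.
Proof.
move=> l0 ln NC lB; apply: dS_le_ball => //.
rewrite -{1}(NN_card q ln); apply: subset_leq_card; apply/subsetP => s sN.
rewrite inE (subsetP NC s sN) /=; case: d_metric => _ [_ dtri].
by apply: le_trans (dtri _ q _) _; rewrite lerD2l (NN_in_ball lB sN).
Qed.

End Metric.
End PointSet.

Theorem theorem2 (R : realFieldType) (M : Type) (d : M -> M -> R)
  (n : nat) (pt : 'I_n -> M) (k l m : nat) (c : R)
  (Q C : {set 'I_n}) :
  is_metric d ->
  injective pt ->
  (1 <= l)%N -> (l <= k)%N -> (k <= n)%N ->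
  m = (k %/ l)%N ->
  1 <= c ->
  #|Q| = m ->
  ftcost d pt Q 1 <= c * ropt d pt m 1 ->
  #|C| = k ->
  (\bigcup_(q in Q) NN d pt [set: 'I_n] (pt q) l) \subset C ->
  ftcost d pt C l <= (1 + 2 * c) * ropt d pt k l.
Proof.
move=> dmet _ l1 lk kn mE c1 Qm hQ Ck NQC.
have n0 : (0 < n)%N by lia.
have [Copt Coptk rE] := ropt_attain d pt l kn.
set r := ropt d pt k l in rE *.
have ball_opt q : (l <= #|ball d pt Copt (pt q) r|)%N.
  by apply: ball_of_dS; rewrite ?Coptk // rE ftcost_ge.
have r0 : 0 <= r.
  rewrite rE; apply: le_trans (ftcost_ge d pt Copt l (Ordinal n0)).
  exact: dS_ge0.
have [X sepX covX] := separated_cover pt dmet (rho := 2 * r) ltac:(lra).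
have Xm : (#|X| <= m)%N.
  rewrite mE leq_divRL // -Coptk.
  by apply: (packing_bound dmet sepX) => x _; apply: ball_opt.
have rcen : ropt d pt m 1 <= 2 * r.
  by apply: ropt_center_le n0 Xm _ covX; rewrite mE (leq_trans (leq_div k l) kn).
have nearQ p : exists2 q, q \in Q & d (pt p) (pt q) <= c * (2 * r).
  have Q0 : (0 < #|Q|)%N by rewrite Qm mE divn_gt0.
  have : dS d pt Q (pt p) 1 <= c * (2 * r).
    apply: le_trans (ftcost_ge d pt Q 1 p) (le_trans hQ _).
    by rewrite ler_wpM2l // ?(le_trans ler01 c1).
  by move/(ball_of_dS Q0)/card_gt0P => [q]; rewrite inE => /andP[qQ pq]; exists q.
apply: ftcost_le => // p; have [q qQ pq] := nearQ p.
have NC : NN d pt [set: 'I_n] (pt q) l \subset C.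
  by apply: subset_trans NQC; apply: (bigcup_sup q qQ).
apply: le_trans (dS_le_via_center dmet (pt p) l1 (leq_trans lk kn) NC (ball_opt q)) _.
by rewrite mulrDl mul1r; lra.
Qed.
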